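(* Let $A$ be a commutative noetherian ring with $1/2\in A$ and $P$ a projective $A$-module of rank $\ge 2$. The natural map $\mu:\pi_0(\mathbb Q'(P))\to\pi_0(\mathbb Q'(P[T]))$, $[v]\mapsto[v]$, is well defined and bijective.
   Context: For a projective module $P$ over a ring $B$, $\mathbb Q'(P)=\{(p,f,z)\in P\oplus P^*\oplus B: z^2+f(p)=1\}$. $\pi_0(\mathbb Q'(P))$ is the quotient of $\mathbb Q'(P)$ by the equivalence relation generated by: $v_0\sim v_1$ if there is $\Phi(W)\in\mathbb Q'(P[W])$ ($W$ a new variable) with $\Phi(0)=v_0$, $\Phi(1)=v_1$. Elements of $\mathbb Q'(P)$ are regarded in $\mathbb Q'(P[T])$ via base change. *)

From HB Require Import structures.
From mathcomp Require Import all_boot all_order all_algebra.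
From Stdlib Require Import Relations.
Set Implicit Arguments. Unset Strict Implicit. Unset Printing Implicit Defensive.
Import GRing.Theory.
Local Open Scope ring_scope.

Definition is_ideal (A : comNzRingType) (I : A -> Prop) : Prop :=
  I 0 /\ (forall x y, I x -> I y -> I (x + y)) /\ (forall a x, I x -> I (a * x)).

Definition noetherian (A : comNzRingType) : Prop :=
  forall I : nat -> A -> Prop,
    (forall k, is_ideal (I k)) ->
    (forall k x, I k x -> I k.+1 x) ->
    exists N, forall k, (N <= k)%N -> forall x, I k x -> I N x.

(* A finitely generated projective B-module P is represented as the image
   P = { p : 'rV_n | p *m e = p } of an idempotent matrix e.  Its dual P^*
   is identified with { f : 'cV_n | e *m f = f }, the functional being
   p |-> (p *m f) 0 0.  Base change along B -> B' is map_mx of e. *)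
Definition idempotent_mx (B : comNzRingType) n (e : 'M[B]_n) : Prop := e *m e = e.

(* rank of P at every prime is >= r : the fibre P (x) k has dimension >= r
   for every ring morphism from A to a field k. *)
Definition rank_ge (A : comNzRingType) n (e : 'M[A]_n) (r : nat) : Prop :=
  forall (K : fieldType) (phi : {rmorphism A -> K}), (r <= \rank (map_mx phi e))%N.

Definition triple (B : comNzRingType) n : Type := ('rV[B]_n * 'cV[B]_n * B)%type.

Definition Qp (B : comNzRingType) n (e : 'M[B]_n) (v : triple B n) : Prop :=
  let: (p, f, z) := v in
  p *m e = p /\ e *m f = f /\ z ^+ 2 + (p *m f) 0 0 = 1.

Definition map_triple (B C : comNzRingType) n (g : B -> C) (v : triple B n) : triple C n :=
  let: (p, f, z) := v in (map_mx g p, map_mx g f, g z).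

Definition htp (B : comNzRingType) n (e : 'M[B]_n) (v0 v1 : triple B n) : Prop :=
  exists Phi : triple {poly B} n,
    Qp (map_mx polyC e) Phi /\
    map_triple (fun q : {poly B} => q.[0]) Phi = v0 /\
    map_triple (fun q : {poly B} => q.[1]) Phi = v1.

Definition pi0rel (B : comNzRingType) n (e : 'M[B]_n) : relation (triple B n) :=
  clos_refl_sym_trans (triple B n) (htp e).

Definition toT (A : comNzRingType) n (v : triple A n) : triple {poly A} n :=
  map_triple (fun a : A => a%:P) v.

From HB Require Import structures.
From mathcomp Require Import all_boot all_order all_algebra.
From Stdlib Require Import Relations.
Local Open Scope ring_scope.
Import GRing.Theory.

(* The proof only uses two facts, and in
   particular none of the hypotheses on A or on the rank of P:
   - pi_0(Q'(-)) is functorial: base change along any ring morphism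
     B -> C preserves Q' and elementary homotopies, hence the relation
     defining pi_0 (lemma [pi0rel_map]).  Applied to A -> A[T] this gives
     well-definedness; applied to evaluation at T = 0, a retraction of
     A -> A[T], it gives injectivity.
   - every u(T) in Q'(P[T]) is homotopic to the constant u(0): the
     substitution T |-> W*T is a ring morphism A[T] -> A[T][W] whose values
     at W = 0 and W = 1 are u(0) and u(T) (lemma [htp_eval0]).  This gives
     surjectivity. *)

Lemma map_triple_comp (B C D : comNzRingType) n (h : C -> D) (k : B -> C)
    (v : triple B n) :
  map_triple h (map_triple k v) = map_triple (h \o k) v.
Proof. by case: v => [[p f] z]; rewrite /= !(map_mx_comp k h). Qed.

Lemma eq_map_triple (B C : comNzRingType) n (h k : B -> C) (v : triple B n) :
  h =1 k -> map_triple h v = map_triple k v.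
Proof. by move=> hk; case: v => [[p f] z]; rewrite /= !(eq_map_mx _ hk) hk. Qed.

Lemma map_triple_id (B : comNzRingType) n (h : B -> B) (v : triple B n) :
  h =1 id -> map_triple h v = v.
Proof. by move=> hk; case: v => [[p f] z]; rewrite /= !(eq_map_mx_id _ hk) hk. Qed.

Lemma Qp_map (B C : comNzRingType) n (g : {rmorphism B -> C}) (e : 'M[B]_n) v :
  Qp e v -> Qp (map_mx g e) (map_triple g v).
Proof.
case: v => [[p f] z] [pe [ef eq1]] /=.
split; first by rewrite -(map_mxM g) pe.
split; first by rewrite -(map_mxM g) ef.
by rewrite -(map_mxM g) mxE -(rmorphXn g) -(rmorphD g) eq1 rmorph1.
Qed.

Lemma htp_map (B C : comNzRingType) n (g : {rmorphism B -> C}) (e : 'M[B]_n) v w :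
  htp e v w -> htp (map_mx g e) (map_triple g v) (map_triple g w).
Proof.
case=> Phi [QPhi [Phi0 Phi1]].
exists (map_triple (map_poly g) Phi); split.
  have -> : map_mx polyC (map_mx g e) = map_mx (map_poly g) (map_mx polyC e).
    rewrite -!map_mx_comp; apply: eq_map_mx => a /=; by rewrite map_polyC.
  exact: Qp_map.
split.
  rewrite -Phi0 !map_triple_comp; apply: eq_map_triple => q /=.
  by rewrite -(rmorph0 g) horner_map.
rewrite -Phi1 !map_triple_comp; apply: eq_map_triple => q /=.
by rewrite -(rmorph1 g) horner_map.
Qed.

Lemma pi0rel_map (B C : comNzRingType) n (g : {rmorphism B -> C}) (e : 'M[B]_n) v w :
  pi0rel e v w -> pi0rel (map_mx g e) (map_triple g v) (map_triple g w).
Proof.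
elim=> [x y xy | x | x y _ yx | x y z _ xy _ yz].
- by apply: rst_step; apply: htp_map.
- exact: rst_refl.
- exact: rst_sym.
- exact: rst_trans xy yz.
Qed.

Section PolynomialBaseChange.
Variable A : comNzRingType.

Lemma eval0_polyC : horner_eval (0 : A) \o polyC =1 id.
Proof. by move=> a; rewrite /= /horner_eval hornerC. Qed.

Lemma eval0_map_polyC n (e : 'M[A]_n) :
  map_mx (horner_eval 0) (map_mx polyC e) = e.
Proof. by rewrite -map_mx_comp; apply: eq_map_mx_id; apply: eval0_polyC. Qed.

Lemma eval0_toT n (v : triple A n) : map_triple (horner_eval 0) (toT v) = v.
Proof. by rewrite /toT map_triple_comp map_triple_id //; apply: eval0_polyC. Qed.

(* The dilation q(T) |-> q(W*T) : A[T] -> A[T][W], the outer variable being W. *)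
Lemma dilation_comm :
  commr_rmorph ((polyC \o polyC)%FUN : {rmorphism A -> {poly {poly A}}}) ('X * 'X%:P).
Proof. by move=> a; apply: mulrC. Qed.

Definition dilation : {rmorphism {poly A} -> {poly {poly A}}} :=
  horner_morph dilation_comm.

Lemma dilationC (a : A) : dilation a%:P = a%:P%:P.
Proof. exact: horner_morphC. Qed.

Lemma dilation_eval0 (q : {poly A}) : (dilation q).[0] = q.[0]%:P.
Proof.
elim/poly_ind: q => [|q c IH]; first by rewrite rmorph0 !horner0 polyC0.
rewrite rmorphD rmorphM /= horner_morphX horner_morphC hornerD hornerM IH.
rewrite hornerM hornerX mul0r mulr0 hornerD hornerMX hornerC !add0r mulr0 add0r.
by rewrite /= hornerC.
Qed.

Lemma dilation_eval1 (q : {poly A}) : (dilation q).[1] = q.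
Proof.
elim/poly_ind: q => [|q c IH]; first by rewrite rmorph0 horner0.
rewrite rmorphD rmorphM /= horner_morphX horner_morphC hornerD hornerM IH.
by rewrite hornerM hornerX hornerC mul1r /= hornerC.
Qed.

(* Contracting homotopy: every u(T) in Q'(P[T]) is connected by the
   elementary homotopy Phi(W) = u(W*T) to the constant element u(0). *)
Lemma htp_eval0 n (e : 'M[A]_n) (u : triple {poly A} n) :
  Qp (map_mx polyC e) u ->
  htp (map_mx polyC e) (toT (map_triple (horner_eval 0) u)) u.
Proof.
move=> Qu; exists (map_triple dilation u); split.
  have -> : map_mx polyC (map_mx polyC e) = map_mx dilation (map_mx polyC e).
    rewrite -!map_mx_comp; apply: eq_map_mx => a /=; by rewrite dilationC.
  exact: Qp_map.
split.
  rewrite /toT !map_triple_comp; apply: eq_map_triple => q /=.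
  exact: dilation_eval0.
by rewrite map_triple_comp map_triple_id //; apply: dilation_eval1.
Qed.

End PolynomialBaseChange.

Theorem lemma4p3 (A : comNzRingType) (n : nat) (e : 'M[A]_n) :
  noetherian A ->
  (exists u : A, 2%:R * u = 1) ->
  idempotent_mx e ->
  rank_ge e 2 ->
  (* mu is well defined *)
  (forall v w : triple A n, Qp e v -> Qp e w ->
     pi0rel e v w -> pi0rel (map_mx polyC e) (toT v) (toT w)) /\
  (* mu is injective *)
  (forall v w : triple A n, Qp e v -> Qp e w ->
     pi0rel (map_mx polyC e) (toT v) (toT w) -> pi0rel e v w) /\
  (* mu is surjective *)
  (forall u : triple {poly A} n, Qp (map_mx polyC e) u ->
     exists v : triple A n, Qp e v /\ pi0rel (map_mx polyC e) u (toT v)).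
Proof.
move=> _ _ _ _; split; last split.
- move=> v w _ _ vw; exact: (@pi0rel_map _ _ _ polyC _ _ _ vw).
- move=> v w _ _ vw; have := @pi0rel_map _ _ _ (horner_eval 0) _ _ _ vw.
  by rewrite eval0_map_polyC !eval0_toT.
- move=> u Qu; exists (map_triple (horner_eval 0) u); split.
    by rewrite -(@eval0_map_polyC _ _ e); apply: Qp_map.
  by apply: rst_sym; apply: rst_step; apply: htp_eval0.
Qed.
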